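(* Let $\Phi(h)$ be a consistent one-step method (i.e.\ of order $p\geq 1$) and let $\alpha_1,\dots,\alpha_l\in\mathbb{C}$ with $\sum_{i=1}^l\alpha_i=1$, so that the composition $$\Psi(h)=\prod_{i=1}^{l}\Phi(\alpha_i h)=\Phi(\alpha_1h)\cdots\Phi(\alpha_lh)$$ is also consistent. Suppose there exists $k$, $1\leq k\leq l$, with $\Re(\alpha_k)<0$. Then for any $\beta_1,\dots,\beta_m\in\mathbb{C}$ such that the method $$\prod_{j=1}^{m}\Psi(\beta_j h)=\prod_{j=1}^{m}\Big(\prod_{i=1}^{l}\Phi(\beta_j\alpha_i h)\Big)$$ is consistent (i.e.\ $\sum_{j=1}^m\beta_j=1$), there exists $j$, $1\le j\le m$, such that $\Re(\beta_j\alpha_k)<0$.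
   Context: A method is a family of (approximate) evolution operators $\Phi(h)$ depending on a step size $h$, approximating the exact flow $e^{h(A+B)}$ of $\dot u = Au+Bu$; it is of order $p$ if $\Phi(h)-e^{h(A+B)}=\mathcal{O}(h^{p+1})$ formally, and consistent if of order at least $1$. Products of methods are interpreted from left to right. A composition $\prod_i\Phi(\gamma_ih)$ of a consistent method is consistent iff $\sum_i\gamma_i=1$. *)

From HB Require Import structures.
From mathcomp Require Import all_boot all_order all_algebra.
From mathcomp Require Export complex.
Set Implicit Arguments.
Unset Strict Implicit.
Unset Printing Implicit Defensive.

From mathcomp Require Import all_boot all_order all_algebra complex.
Import Order.TTheory GRing.Theory Num.Theory.
Local Open Scope ring_scope.

(* Since [\sum_j beta_j = 1], the weights [beta_j] split [alpha_k] into the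
   pieces [beta_j * alpha_k]; taking real parts, the negative number
   [Re alpha_k] is a sum of the [Re (beta_j * alpha_k)], so one of them is
   negative. *)

Lemma sumr_lt0_exists (R : numDomainType) (I : finType) (F : I -> R) :
  (forall i, F i \is Num.real) -> \sum_i F i < 0 -> exists i, F i < 0.
Proof.
move=> Freal sum_lt0; apply/existsP; apply: contraLR sum_lt0 => /existsPn F_ge0.
rewrite -real_leNgt ?real0 ?rpred_sum //.
by apply: sumr_ge0 => i _; rewrite real_leNgt ?real0 ?F_ge0.
Qed.

Lemma Re_sum_mull {C : numClosedFieldType} {I : finType} (z : C) {w : I -> C} :
  \sum_i w i = 1 -> 'Re z = \sum_i 'Re (w i * z).
Proof. by move=> w_sum1; rewrite -raddf_sum -mulr_suml w_sum1 mul1r. Qed.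

Theorem lemma2p1 (R : rcfType) (l m : nat)
  (alpha : 'I_l -> R[i]) (beta : 'I_m -> R[i]) (k : 'I_l) :
  \sum_(i < l) alpha i = 1 ->
  Re (alpha k) < 0 ->
  \sum_(j < m) beta j = 1 ->
  exists j : 'I_m, Re (beta j * alpha k) < 0.
Proof.
move=> _ Re_alpha_lt0 beta_sum1.
apply: sumr_lt0_exists => [j|]; first exact: Creal_Re.
by rewrite -(Re_sum_mull (alpha k) beta_sum1).
Qed.
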